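(* Let $n\ge 3$. For any word $w(A,B)\in\mathbb F_2=\langle A,B\rangle$, the kernel $\operatorname{Ker}(\Theta_n^w)$ contains a subgroup isomorphic to the free group of rank $2$.
   Context: For $n\ge 2$, the flat virtual braid group $FVB_n$ is the group with generators $\sigma_1,\dots,\sigma_{n-1},\rho_1,\dots,\rho_{n-1}$ and defining relations: $\sigma_i^2=1$, $\rho_i^2=1$ for $1\le i\le n-1$; $\sigma_i\sigma_{i+1}\sigma_i=\sigma_{i+1}\sigma_i\sigma_{i+1}$, $\rho_i\rho_{i+1}\rho_i=\rho_{i+1}\rho_i\rho_{i+1}$ and $\rho_i\rho_{i+1}\sigma_i=\sigma_{i+1}\rho_i\rho_{i+1}$ for $1\le i\le n-2$; $\sigma_i\sigma_j=\sigma_j\sigma_i$, $\rho_i\rho_j=\rho_j\rho_i$ and $\rho_i\sigma_j=\sigma_j\rho_i$ for $|i-j|\ge 2$. $\mathbb F_{2n}$ is the free group on $x_1,\dots,x_n,y_1,\dots,y_n$; automorphisms compose left to right, $(\varphi\psi)(f)=\psi(\varphi(f))$; generators not mentioned are fixed. For $w(A,B)\in\mathbb F_2$, $\Theta_n^w\colon FVB_n\to\mathrm{Aut}(\mathbb F_{2n})$ is the homomorphism given by $\Theta_n^w(\sigma_i): x_i\mapsto x_{i+1}w(y_i,y_{i+1}),\ x_{i+1}\mapsto x_i w(y_i,y_{i+1})^{-1}$ and $\Theta_n^w(\rho_i): x_i\mapsto x_{i+1},\ x_{i+1}\mapsto x_i,\ y_i\mapsto y_{i+1},\ y_{i+1}\mapsto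 y_i$. *)

From mathcomp Require Import all_boot.
Set Implicit Arguments. Unset Strict Implicit. Unset Printing Implicit Defensive.

(* A letter over a generator type G is (g, e): e = false means g, e = true g^{-1}. *)
Definition flip (G : Type) (a : G * bool) : G * bool := (a.1, ~~ a.2).
Definition winv (G : Type) (s : seq (G * bool)) : seq (G * bool) := rev (map (@flip G) s).

Definition reduce (G : eqType) (s : seq (G * bool)) : seq (G * bool) :=
  foldr (fun a acc => match acc with
                      | b :: acc' => if b == flip a then acc' else a :: acc
                      | [::] => [:: a] end) [::] s.

Definition reduced (G : eqType) (s : seq (G * bool)) : bool := reduce s == s.

Definition wsubst (G : Type) (H : eqType) (f : G -> seq (H * bool))
  (s : seq (G * bool)) : seq (H * bool) :=
  reduce (flatten (map (fun a => if a.2 then winv (f a.1) else f a.1) s)).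

(* F_2 = <A,B>: generators bool, false = A, true = B.
   F_{2n}: generators (bool * nat): (false, j) = x_{j+1}, (true, j) = y_{j+1}
   (0-based indices j < n).
   FVB_n: generators (bool * nat): (false, i) = sigma_{i+1}, (true, i) = rho_{i+1}
   (0-based indices i < n-1). *)

Definition theta_gen (w : seq (bool * bool)) (g : bool * nat) (z : bool * nat)
  : seq ((bool * nat) * bool) :=
  let i := g.2 in
  if ~~ g.1 then
    (* sigma_i : x_i -> x_{i+1} w(y_i,y_{i+1}), x_{i+1} -> x_i w(y_i,y_{i+1})^{-1} *)
    let W := wsubst (fun b : bool => [:: ((true, if b then i.+1 else i), false)]) w in
    if z == (false, i) then ((false, i.+1), false) :: W
    else if z == (false, i.+1) then ((false, i), false) :: winv W
    else [:: (z, false)]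
  else
    if z.2 == i then [:: ((z.1, i.+1), false)]
    else if z.2 == i.+1 then [:: ((z.1, i), false)]
    else [:: (z, false)].

(* Theta_n^w(g1^{e1} ... gk^{ek}) applied to f, with left-to-right composition
   (phi psi)(f) = psi(phi(f)).  Each Theta_n^w(g) is an involution of F_{2n},
   so Theta_n^w(g^{-1}) = Theta_n^w(g). *)
Definition theta_word (w : seq (bool * bool)) (u : seq ((bool * nat) * bool))
  (f : seq ((bool * nat) * bool)) : seq ((bool * nat) * bool) :=
  foldl (fun f a => wsubst (theta_gen w a.1) f) f u.

Definition in_ker (n : nat) (w : seq (bool * bool)) (u : seq ((bool * nat) * bool))
  : Prop :=
  forall z : bool * nat, z.2 < n -> theta_word w u [:: (z, false)] = [:: (z, false)].

Definition sg (i : nat) : (bool * nat) * bool := ((false, i), false).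
Definition rh (i : nat) : (bool * nat) * bool := ((true, i), false).

Inductive fvb_defrel (n : nat) : seq ((bool * nat) * bool) -> seq ((bool * nat) * bool) -> Prop :=
| R_sq_s i : i < n.-1 -> fvb_defrel n [:: sg i; sg i] [::]
| R_sq_r i : i < n.-1 -> fvb_defrel n [:: rh i; rh i] [::]
| R_br_s i : i.+1 < n.-1 ->
    fvb_defrel n [:: sg i; sg i.+1; sg i] [:: sg i.+1; sg i; sg i.+1]
| R_br_r i : i.+1 < n.-1 ->
    fvb_defrel n [:: rh i; rh i.+1; rh i] [:: rh i.+1; rh i; rh i.+1]
| R_mixed i : i.+1 < n.-1 ->
    fvb_defrel n [:: rh i; rh i.+1; sg i] [:: sg i.+1; rh i; rh i.+1]
| R_comm_ss i j : i < n.-1 -> j < n.-1 -> (i.+1 < j) || (j.+1 < i) ->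
    fvb_defrel n [:: sg i; sg j] [:: sg j; sg i]
| R_comm_rr i j : i < n.-1 -> j < n.-1 -> (i.+1 < j) || (j.+1 < i) ->
    fvb_defrel n [:: rh i; rh j] [:: rh j; rh i]
| R_comm_rs i j : i < n.-1 -> j < n.-1 -> (i.+1 < j) || (j.+1 < i) ->
    fvb_defrel n [:: rh i; sg j] [:: sg j; rh i].

Inductive fvb_eq (n : nat) : seq ((bool * nat) * bool) -> seq ((bool * nat) * bool) -> Prop :=
| E_refl u : fvb_eq n u u
| E_sym u v : fvb_eq n u v -> fvb_eq n v u
| E_trans u v t : fvb_eq n u v -> fvb_eq n v t -> fvb_eq n u t
| E_ctx p s u v : fvb_eq n u v -> fvb_eq n (p ++ u ++ s) (p ++ v ++ s)
| E_cancel a : a.1.2 < n.-1 -> fvb_eq n [:: a; flip a] [::]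
| E_rel u v : fvb_defrel n u v -> fvb_eq n u v.

Definition fvb_word (n : nat) (u : seq ((bool * nat) * bool)) : bool :=
  all (fun a => a.1.2 < n.-1) u.

From mathcomp Require Import all_boot zify.
Set Implicit Arguments. Unset Strict Implicit. Unset Printing Implicit Defensive.

(* Two explicit words U, V in sigma_1, rho_1, sigma_2, rho_2 lie in Ker(Theta_n^w)
   for every w and generate a free subgroup of rank 2 of FVB_n.

   - Free reduction: [reduce] is a normal form compatible with concatenation,
     and substitution [wsubst] is a homomorphism that commutes with reduction
     and composes.
   - Independence of w: Theta_n^w acts on the "atoms" x_j, y_j and
     W_{j,k} = w(y_j, y_k) by substitutions that do not mention w.  Hence
     membership of a word on sigma_1, rho_1, sigma_2, rho_2 in the kernel is
     decided by a finite w-free computation on the atoms of the first three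
     strands.
   - A crossing invariant FVB_n -> F_2: colour the strands, let rho_i and
     sigma_i permute the colours, and let sigma_i also record a letter
     depending on the colours of the two strands it crosses.  The reduced
     record is invariant under the defining relations of FVB_n.
   - U and V are pure for the colouring and are sent to words G, H of F_2 such
     that no cancellation occurs between consecutive letters of any reduced
     word in G^{+-1}, H^{+-1}; so no nonempty reduced word in U, V is trivial. *)

Section FreeReduction.
Variable G : eqType.
Implicit Types (a b : G * bool) (s t u : seq (G * bool)).

Definition push a s : seq (G * bool) :=
  match s with
  | b :: s' => if b == flip a then s' else a :: s
  | [::] => [:: a] end.

Lemma reduce_cons a s : reduce (a :: s) = push a (reduce s).
Proof. by []. Qed.

Fixpoint nored s : bool :=
  match s with
  | a :: ((b :: _) as t) => (b != flip a) && nored t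
  | _ => true end.

Lemma flipK a : flip (flip a) = a.
Proof. by case: a => x [|]. Qed.

Lemma nored_tl a s : nored (a :: s) -> nored s.
Proof. by case: s => //= b s /andP[]. Qed.

Lemma nored_push a s : nored s -> nored (push a s).
Proof.
case: s => [|b s] //= Hs.
by case: ifP => Hb; [exact: nored_tl Hs | rewrite /= Hb Hs].
Qed.

Lemma nored_foldr s t : nored t -> nored (foldr push t s).
Proof. by move=> Ht; elim: s => //= a s IH; apply: nored_push. Qed.

Lemma nored_reduce s : nored (reduce s).
Proof. exact: (@nored_foldr s [::]). Qed.

Lemma reduce_id s : nored s -> reduce s = s.
Proof.
elim: s => // a s IH Hs; rewrite reduce_cons IH; last exact: nored_tl Hs.
by case: s Hs {IH} => //= b s /andP[Hb _]; rewrite (negbTE Hb).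
Qed.

Lemma reduced_nored s : reduced s -> nored s.
Proof. by move/eqP <-; apply: nored_reduce. Qed.

Lemma reduceK s : reduce (reduce s) = reduce s.
Proof. exact/reduce_id/nored_reduce. Qed.

(* Cancellation-freeness only concerns adjacent letters, so it can be checked
   on overlapping pieces. *)
Lemma nored_cat3 s t u : t != [::] ->
  nored (s ++ t) -> nored (t ++ u) -> nored (s ++ t ++ u).
Proof.
move=> Ht; elim: s => // x s IH.
case: s IH => [|z s] IH /=; last by move=> /andP[-> /IH Hs] /Hs.
by case: t Ht {IH} => // y t _ /= /andP[-> _] ->.
Qed.

Lemma push_flip a s : nored s -> push a (push (flip a) s) = s.
Proof.
case: s => [|b s] /=; first by rewrite eqxx.
case: ifP => [/eqP ->|_] /=; rewrite ?flipK ?eqxx //.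
by case: s => [|c s] //= /andP[Hc _]; rewrite (negbTE Hc).
Qed.

Lemma foldr_push_reduce s t : nored t ->
  foldr push t (reduce s) = foldr push t s.
Proof.
move=> Ht; elim: s => //= a s <-.
case: (reduce s) (nored_reduce s) => [|b r] //= Hr.
case: ifP => [/eqP Hb|_] //=.
by rewrite Hb push_flip //; apply: nored_foldr.
Qed.

Lemma reduce_cat s t : reduce (s ++ t) = foldr push (reduce t) s.
Proof. exact: foldr_cat. Qed.

Lemma reduce_catl s t : reduce (reduce s ++ t) = reduce (s ++ t).
Proof. by rewrite !reduce_cat foldr_push_reduce // nored_reduce. Qed.

Lemma reduce_catr s t : reduce (s ++ reduce t) = reduce (s ++ t).
Proof. by rewrite !reduce_cat reduceK. Qed.

Lemma reduce_mid s t u : reduce (s ++ reduce t ++ u) = reduce (s ++ t ++ u).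
Proof. by rewrite -reduce_catr reduce_catl reduce_catr. Qed.

Lemma winv_cons a s : winv (a :: s) = winv s ++ [:: flip a].
Proof. by rewrite /winv /= rev_cons cats1. Qed.

Lemma winv_cat s t : winv (s ++ t) = winv t ++ winv s.
Proof. by rewrite /winv map_cat rev_cat. Qed.

Lemma winvK s : winv (winv s) = s.
Proof. by rewrite /winv map_rev revK -map_comp map_id_in // => a _ /=; rewrite flipK. Qed.

Lemma cancel_l s t : reduce (s ++ winv s ++ t) = reduce t.
Proof.
elim: s t => // a s IH t.
have -> : (a :: s) ++ winv (a :: s) ++ t = a :: (s ++ winv s ++ (flip a :: t)).
  by rewrite winv_cons -catA.
by rewrite reduce_cons IH reduce_cons push_flip ?nored_reduce.
Qed.

Lemma cancel_r s t : reduce (winv s ++ s ++ t) = reduce t.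
Proof. by have := cancel_l (winv s) t; rewrite winvK. Qed.

Lemma reduce_winv s t : reduce s = reduce t -> reduce (winv s) = reduce (winv t).
Proof.
move=> Est.
have -> : reduce (winv s) = reduce (winv s ++ t ++ winv t).
  by rewrite -(cats0 (winv t)) -reduce_catr cancel_l reduce_catr cats0.
rewrite -reduce_mid -Est reduce_mid -[winv s ++ _]cats0.
by rewrite -catA -(cats0 (winv t)) -catA cancel_r cats0.
Qed.

End FreeReduction.

Section Substitution.
Variables G H : eqType.
Implicit Types (f : G -> seq (H * bool)) (a : G * bool) (s t : seq (G * bool)).

Definition img f s : seq (H * bool) :=
  flatten (map (fun a => if a.2 then winv (f a.1) else f a.1) s).

Lemma wsubstE f s : wsubst f s = reduce (img f s).
Proof. by []. Qed.

Lemma img_cat f s t : img f (s ++ t) = img f s ++ img f t.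
Proof. by rewrite /img map_cat flatten_cat. Qed.

Lemma img_cons f a s :
  img f (a :: s) = (if a.2 then winv (f a.1) else f a.1) ++ img f s.
Proof. by []. Qed.

Lemma img_flip f a : (if (flip a).2 then winv (f (flip a).1) else f (flip a).1)
  = winv (if a.2 then winv (f a.1) else f a.1).
Proof. by case: a => x [|] /=; rewrite ?winvK. Qed.

Lemma img_winv f s : img f (winv s) = winv (img f s).
Proof.
elim: s => //= a s IH.
by rewrite winv_cons img_cat IH img_cons winv_cat /img /= cats0 img_flip.
Qed.

Lemma img_reduce f s : reduce (img f (reduce s)) = reduce (img f s).
Proof.
elim: s => // a s IH.
have -> : reduce (img f (reduce (a :: s))) = reduce (img f (a :: reduce s)).
  rewrite reduce_cons; case: (reduce s) => [|b t] //=.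
  case: ifP => [/eqP Hb|_] //.
  by rewrite !img_cons Hb img_flip cancel_l.
by rewrite !img_cons -reduce_catr IH reduce_catr.
Qed.

Lemma wsubst_ext f g s : f =1 g -> wsubst f s = wsubst g s.
Proof.
by move=> Efg; rewrite /wsubst; congr (reduce (flatten _)); apply: eq_map => a; rewrite Efg.
Qed.

Lemma reduce_wsubst f s : reduce (wsubst f s) = wsubst f s.
Proof. exact: reduceK. Qed.

Lemma wsubst1 f (z : G) : wsubst f [:: (z, false)] = reduce (f z).
Proof. by rewrite wsubstE /img /= cats0. Qed.

End Substitution.

Lemma wsubst_comp (G H K : eqType) (f : H -> seq (K * bool)) (g : G -> seq (H * bool)) s :
  wsubst f (wsubst g s) = wsubst (fun c => wsubst f (g c)) s.
Proof.
rewrite !wsubstE img_reduce.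
elim: s => // a s IH.
rewrite img_cons img_cat img_cons -reduce_catr IH reduce_catr.
rewrite -[LHS]reduce_catl -[RHS]reduce_catl; congr (reduce (_ ++ _)).
case: a => c [|] /=; last by rewrite reduceK.
by rewrite img_winv; apply: reduce_winv; rewrite reduceK.
Qed.

Definition transp (i k : nat) : nat :=
  if k == i then i.+1 else if k == i.+1 then i else k.

Lemma transpK i k : transp i (transp i k) = k.
Proof. rewrite /transp; repeat (case: eqP => /=; try lia); lia. Qed.

Lemma transp_inj i : injective (transp i).
Proof. exact: can_inj (transpK i). Qed.

Lemma transp_l i : transp i i = i.+1.
Proof. by rewrite /transp eqxx. Qed.

Lemma transp_r i : transp i i.+1 = i.
Proof. rewrite /transp; repeat (case: eqP => /=; try lia); lia. Qed.

Lemma transp_next i : transp i i.+2 = i.+2.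
Proof. rewrite /transp; repeat (case: eqP => /=; try lia); lia. Qed.

Lemma transp_prev i : transp i.+1 i = i.
Proof. rewrite /transp; repeat (case: eqP => /=; try lia); lia. Qed.

Lemma transp_far i j : (i.+1 < j) || (j.+1 < i) -> transp i j = j /\ transp i j.+1 = j.+1.
Proof. move=> Hij; rewrite /transp; split; repeat (case: eqP => /=; try lia); lia. Qed.

Lemma transp_comm i j k : (i.+1 < j) || (j.+1 < i) ->
  transp i (transp j k) = transp j (transp i k).
Proof. move=> Hij; rewrite /transp; repeat (case: eqP => /=; try lia); lia. Qed.

Lemma transp_braid i k :
  transp i (transp i.+1 (transp i k)) = transp i.+1 (transp i (transp i.+1 k)).
Proof. rewrite /transp; repeat (case: eqP => /=; try lia); lia. Qed.

(* Atoms (t, (j, k)): the generator x_j if t = 0, y_j if t = 1, and the word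
   W_{j,k} = w(y_j, y_k) if t >= 2. *)
Definition atom := (nat * (nat * nat))%type.

(* Action of the generator g of FVB_n on atoms, which does not involve w:
   sigma_i sends x_i to x_{i+1} W_{i,i+1} and x_{i+1} to x_i W_{i,i+1}^{-1};
   rho_i exchanges the strand indices i and i+1. *)
Definition theta_atom (g : bool * nat) (c : atom) : seq (atom * bool) :=
  let i := g.2 in
  if ~~ g.1 then
    if (c.1 == 0) && (c.2.1 == i) then [:: ((0, (i.+1, 0)), false); ((2, (i, i.+1)), false)]
    else if (c.1 == 0) && (c.2.1 == i.+1) then [:: ((0, (i, 0)), false); ((2, (i, i.+1)), true)]
    else [:: (c, false)]
  else if c.1 < 2 then [:: ((c.1, (transp i c.2.1, c.2.2)), false)]
  else [:: ((c.1, (transp i c.2.1, transp i c.2.2)), false)].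

Definition theta_atom_word (u : seq ((bool * nat) * bool)) (s : seq (atom * bool)) :=
  foldl (fun s a => wsubst (theta_atom a.1) s) s u.

Section AtomValues.
Variable w : seq (bool * bool).

Definition atom_val (c : atom) : seq ((bool * nat) * bool) :=
  if c.1 == 0 then [:: ((false, c.2.1), false)]
  else if c.1 == 1 then [:: ((true, c.2.1), false)]
  else wsubst (fun b : bool => [:: ((true, if b then c.2.2 else c.2.1), false)]) w.

Lemma theta_gen_x g j k : wsubst (theta_gen w g) (atom_val (0, (j, k))) =
  wsubst atom_val (theta_atom g (0, (j, k))).
Proof.
case: g => [[|] i]; rewrite /atom_val /theta_atom /theta_gen /= !wsubst1 /=.
  by rewrite /transp; case: (j == i); case: (j == i.+1).
case: (j =P i) => [->|Hji]; first by rewrite eqxx [RHS]wsubstE /img /= cats0.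
have -> : ((false, j) == (false, i)) = false by apply/eqP => -[].
case: (j =P i.+1) => [->|Hji1]; first by rewrite eqxx [RHS]wsubstE /img /= cats0.
by have -> : ((false, j) == (false, i.+1)) = false by apply/eqP => -[].
Qed.

Lemma theta_gen_y g j k : wsubst (theta_gen w g) (atom_val (1, (j, k))) =
  wsubst atom_val (theta_atom g (1, (j, k))).
Proof.
case: g => [[|] i]; rewrite /atom_val /theta_atom /theta_gen /= !wsubst1 //=.
by rewrite /transp; case: (j == i); case: (j == i.+1).
Qed.

Lemma theta_gen_W g t j k : wsubst (theta_gen w g) (atom_val (t.+2, (j, k))) =
  wsubst atom_val (theta_atom g (t.+2, (j, k))).
Proof.
rewrite /atom_val /theta_atom /= wsubst_comp.
case: g => [[|] i]; rewrite /= wsubst1 /= reduce_wsubst; apply: wsubst_ext => -[];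
  rewrite wsubst1 /theta_gen /= /transp //.
  by case: (k == i); case: (k == i.+1).
by case: (j == i); case: (j == i.+1).
Qed.

Lemma theta_gen_atom g c :
  wsubst (theta_gen w g) (atom_val c) = wsubst atom_val (theta_atom g c).
Proof.
by case: c => [[|[|t]] [j k]]; [apply: theta_gen_x | apply: theta_gen_y | apply: theta_gen_W].
Qed.

Lemma theta_word_atoms u s :
  theta_word w u (wsubst atom_val s) = wsubst atom_val (theta_atom_word u s).
Proof.
elim: u s => // a u IH s.
rewrite /theta_word /= -/(theta_word w u _) wsubst_comp.
by rewrite (wsubst_ext _ (theta_gen_atom a.1)) -wsubst_comp IH.
Qed.

End AtomValues.

(* Words in sigma_1, rho_1, sigma_2, rho_2 only (0-based indices 0, 1). *)
Definition three_strand (u : seq ((bool * nat) * bool)) : bool :=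
  all (fun a => a.1.2 < 2) u.

Lemma fvb_word_three_strand n u : 3 <= n -> three_strand u -> fvb_word n u.
Proof. by move=> Hn; apply: sub_all => a /=; lia. Qed.

Lemma theta_atom_word_far u t j k : three_strand u -> t < 2 -> 2 < j ->
  theta_atom_word u [:: ((t, (j, k)), false)] = [:: ((t, (j, k)), false)].
Proof.
move=> + Ht Hj; elim: u => //= -[[b i] e] u IH /andP[/= Hi Hu].
have Hstep : theta_atom (b, i) (t, (j, k)) = [:: ((t, (j, k)), false)].
  have Hji : (j == i) = false by apply/eqP; lia.
  have Hji1 : (j == i.+1) = false by apply/eqP; lia.
  by case: b; rewrite /theta_atom /= ?Ht /transp Hji Hji1 ?andbF.
by rewrite -/(theta_atom_word u _) wsubst1 Hstep reduce_id // IH.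
Qed.

Definition fixes_test_atoms (u : seq ((bool * nat) * bool)) : bool :=
  all (fun c => theta_atom_word u [:: (c, false)] == [:: (c, false)])
    [:: (0, (0, 0)); (0, (1, 0)); (0, (2, 0)); (1, (0, 0)); (1, (1, 0)); (1, (2, 0))].

Lemma in_ker_of_atoms n w u : three_strand u -> fixes_test_atoms u -> in_ker n w u.
Proof.
move=> Hu Htest [b j] _.
have Hfix t : t < 2 -> theta_atom_word u [:: ((t, (j, 0)), false)] = [:: ((t, (j, 0)), false)].
  move=> Ht; case: (ltnP 2 j) => Hj; first exact: theta_atom_word_far.
  apply/eqP/(allP Htest).
  by case: j Hj => [|[|[|j]]] // _; case: t Ht => [|[|t]].
have -> : [:: ((b, j), false)] = wsubst (atom_val w) [:: ((b : nat, (j, 0)), false)].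
  by rewrite wsubst1; case: b.
by rewrite theta_word_atoms Hfix //; case: b.
Qed.

(* Colour the strands; crossing strands of colours {0,1} or {1,2} records A^{+-1}
   and crossing strands of colours {0,2} records B^{+-1}, the sign given by
   the order of the colours. *)
Definition crossing_letter (a b : nat) : seq (bool * bool) :=
  match a, b with
  | 0, 1 => [:: (false, false)]
  | 1, 0 => [:: (false, true)]
  | 1, 2 => [:: (false, false)]
  | 2, 1 => [:: (false, true)]
  | 0, 2 => [:: (true, false)]
  | 2, 0 => [:: (true, true)]
  | _, _ => [::] end.

(* The record of the word s when position k initially carries the colour p k:
   sigma_i and rho_i both swap the colours at positions i, i+1, and sigma_i
   also records the letter of the crossing. *)
Fixpoint crossing_word (p : nat -> nat) (s : seq ((bool * nat) * bool)) : seq (bool * bool) :=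
  match s with
  | [::] => [::]
  | a :: s' => (if a.1.1 then [::] else crossing_letter (p a.1.2) (p a.1.2.+1))
                ++ crossing_word (p \o transp a.1.2) s'
  end.

Fixpoint colouring_after (p : nat -> nat) (s : seq ((bool * nat) * bool)) : nat -> nat :=
  match s with
  | [::] => p
  | a :: s' => colouring_after (p \o transp a.1.2) s'
  end.

Lemma crossing_word_ext p p' s : p =1 p' -> crossing_word p s = crossing_word p' s.
Proof.
elim: s p p' => //= a s IH p p' Ep.
by rewrite !Ep (IH _ (p' \o transp a.1.2)) // => k /=; rewrite Ep.
Qed.

Lemma colouring_after_ext p p' s : p =1 p' -> colouring_after p s =1 colouring_after p' s.
Proof. by elim: s p p' => //= a s IH p p' Ep; apply: IH => k /=; rewrite Ep. Qed.

Lemma crossing_word_cat p s t :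
  crossing_word p (s ++ t) = crossing_word p s ++ crossing_word (colouring_after p s) t.
Proof. by elim: s p => //= a s IH p; rewrite IH catA. Qed.

Lemma colouring_after_cat p s t :
  colouring_after p (s ++ t) = colouring_after (colouring_after p s) t.
Proof. by elim: s p => //= a s IH p; rewrite IH. Qed.

Lemma colouring_after_comp p s k : colouring_after p s k = p (colouring_after id s k).
Proof. by elim: s p k => //= a s IH p k; rewrite IH [in RHS]IH. Qed.

Lemma colouring_after_inj p s : injective p -> injective (colouring_after p s).
Proof. by elim: s p => //= a s IH p Hp; apply/IH/inj_comp => //; apply: transp_inj. Qed.

Lemma crossing_letter_inv a b : crossing_letter b a = winv (crossing_letter a b).
Proof. by case: a => [|[|[|a]]]; case: b => [|[|[|b]]]. Qed.

Lemma crossing_letter_cancel a b t :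
  reduce (crossing_letter a b ++ crossing_letter b a ++ t) = reduce t.
Proof. by rewrite [crossing_letter b a]crossing_letter_inv cancel_l. Qed.

Lemma crossing_letter_braid a b c :
  reduce (crossing_letter a b ++ crossing_letter a c ++ crossing_letter b c) =
  reduce (crossing_letter b c ++ crossing_letter a c ++ crossing_letter a b).
Proof.
by case: a => [|[|[|a]]]; case: b => [|[|[|b]]]; case: c => [|[|[|c]]]; rewrite /= ?cats0.
Qed.

Lemma crossing_letter_far a b c d : a != c -> a != d -> b != c -> b != d ->
  reduce (crossing_letter a b ++ crossing_letter c d) =
  reduce (crossing_letter c d ++ crossing_letter a b).
Proof.
by case: a => [|[|[|a]]]; case: b => [|[|[|b]]]; case: c => [|[|[|c]]];
  case: d => [|[|[|d]]]; rewrite /= ?cats0.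
Qed.

Definition same_crossing (p : nat -> nat) (s t : seq ((bool * nat) * bool)) : Prop :=
  reduce (crossing_word p s) = reduce (crossing_word p t) /\
  colouring_after p s =1 colouring_after p t.

Lemma same_crossing_ctx p pre suf s t : injective p ->
  (forall q, injective q -> same_crossing q s t) ->
  same_crossing p (pre ++ s ++ suf) (pre ++ t ++ suf).
Proof.
move=> Hp /(_ _ (colouring_after_inj (s := pre) Hp)) [Ew Ec].
rewrite /same_crossing !crossing_word_cat !colouring_after_cat.
split; last exact: colouring_after_ext.
by rewrite -reduce_mid Ew reduce_mid (crossing_word_ext suf Ec).
Qed.

Lemma same_crossing_cancel p a : same_crossing p [:: a; flip a] [::].
Proof.
case: a => [[b i] e]; rewrite /same_crossing /= transp_l transp_r.
split=> [|k /=]; last by rewrite transpK.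
by case: b; rewrite //= cats0 -(cats0 (_ ++ _)) -catA crossing_letter_cancel.
Qed.

Lemma same_crossing_defrel n p u v : injective p -> fvb_defrel n u v -> same_crossing p u v.
Proof.
move=> Hp [] {u v} i; rewrite /same_crossing /=.
- move=> _; rewrite transp_l transp_r; split=> [|k /=]; last by rewrite transpK.
  by rewrite cats0 -(cats0 (_ ++ _)) -catA crossing_letter_cancel.
- by move=> _; split=> // k; rewrite /= transpK.
- move=> _; rewrite ?transp_l ?transp_r ?transp_next ?transp_prev /=.
  rewrite ?transp_l ?transp_r ?transp_next ?transp_prev.
  by split=> [|k]; [rewrite !cats0; apply: crossing_letter_braid | rewrite /= transp_braid].
- by move=> _; split=> // k; rewrite /= transp_braid.
- move=> _; rewrite ?transp_l ?transp_r ?transp_next ?transp_prev /=.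
  rewrite ?transp_l ?transp_r ?transp_next ?transp_prev.
  by split=> [|k]; [rewrite !cats0 | rewrite /= transp_braid].
- move=> j _ _ Hij; have [Hj Hj1] := transp_far Hij.
  have [Hi Hi1] : transp j i = i /\ transp j i.+1 = i.+1 by apply: transp_far; rewrite orbC.
  rewrite Hj Hj1 Hi Hi1; split=> [|k]; last by rewrite /= transp_comm.
  by rewrite !cats0; apply: crossing_letter_far; apply/eqP => /Hp; lia.
- by move=> j _ _ Hij; split=> // k; rewrite /= transp_comm.
- move=> j _ _ Hij; have [Hj Hj1] := transp_far Hij.
  by rewrite Hj Hj1; split=> [|k]; [rewrite !cats0 | rewrite /= transp_comm].
Qed.

Lemma crossing_invariant n s t : fvb_eq n s t ->
  forall p, injective p -> same_crossing p s t.
Proof.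
elim=> {s t} [s|s t _ IH|s t r _ IH1 _ IH2|pre suf s t _ IH|a _|s t Hst] p Hp.
- by [].
- by case: (IH p Hp) => Ew Ec; split=> // k; rewrite Ec.
- case: (IH1 p Hp) => Ew1 Ec1; case: (IH2 p Hp) => Ew2 Ec2.
  by split=> [|k]; rewrite ?Ew1 ?Ew2 ?Ec1 ?Ec2.
- exact: same_crossing_ctx.
- exact: same_crossing_cancel.
- exact: same_crossing_defrel Hst.
Qed.

Lemma same_crossing_push p a t : same_crossing p (push a t) (a :: t).
Proof.
case: t => [|b t] //=; case: ifP => [/eqP ->|_] //.
case: a => [[c i] e]; rewrite /same_crossing /= transp_l transp_r.
have Ep : (p \o transp i) \o transp i =1 p by move=> k /=; rewrite transpK.
split=> [|k]; last by symmetry; apply: colouring_after_ext.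
by rewrite (crossing_word_ext t Ep); case: c => //=; rewrite crossing_letter_cancel.
Qed.

Lemma same_crossing_reduce p s : same_crossing p (reduce s) s.
Proof.
elim: s p => [|a s IH] p //; rewrite reduce_cons.
have [Ew Ec] := same_crossing_push p a (reduce s).
have [Ew' Ec'] := IH (p \o transp a.1.2).
split=> [|k]; rewrite ?Ew ?Ec /=; last exact: Ec'.
by rewrite -reduce_catr Ew' reduce_catr.
Qed.

Lemma colouring_after_far s k : three_strand s -> 2 < k -> colouring_after id s k = k.
Proof.
elim: s => //= a s IH /andP[Ha Hs] Hk.
by rewrite colouring_after_comp IH //= /transp; repeat (case: eqP => /=; try lia).
Qed.

Definition fixes_colours (s : seq ((bool * nat) * bool)) : bool :=
  [&& colouring_after id s 0 == 0, colouring_after id s 1 == 1 & colouring_after id s 2 == 2].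

Lemma colouring_after_pure s : three_strand s -> fixes_colours s ->
  forall p, colouring_after p s =1 p.
Proof.
move=> Hs /and3P[/eqP H0 /eqP H1 /eqP H2] p k; rewrite colouring_after_comp; congr p.
by case: (ltnP 2 k) => Hk; [exact: colouring_after_far | case: k Hk => [|[|[|k]]]].
Qed.

Lemma flatten_nored (G H : eqType) (f : G * bool -> seq (H * bool)) a s :
  (forall b, nored (f b) && (f b != [::])) ->
  (forall b c, c != flip b -> nored (f b ++ f c)) ->
  nored (a :: s) -> nored (flatten (map f (a :: s))).
Proof.
move=> Hf Hjunc; elim: s a => [|b s IH] a /=.
  by move=> _; rewrite cats0; case/andP: (Hf a).
move=> /andP[Hba Hs]; have /andP[_ Hb] := Hf b.
by apply: nored_cat3 => //; [exact: Hjunc | exact: (IH b Hs)].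
Qed.

(* The witnesses U = kernel_u, V = kernel_v and their records G = image_u,
   H = image_v; a letter (false, e) of F_2 is A, (true, e) is B, inverted when e. *)
Definition kernel_u : seq ((bool * nat) * bool) := [::
  sg 0; rh 0; sg 0; rh 0; rh 0; sg 1; rh 1; sg 1; rh 1; rh 0; rh 0; sg 0; rh 0;
  sg 0; rh 0; rh 1; sg 1; rh 1; sg 1; rh 0; rh 0; sg 0; rh 0; sg 0; sg 0; rh 0;
  sg 1; sg 0; rh 0; sg 1; sg 0; rh 0; sg 0; rh 0; sg 1; rh 0; sg 0; sg 1; rh 0;
  sg 0; rh 0; sg 1; rh 1; sg 1; rh 1; rh 0; sg 0; rh 0; sg 0; rh 0; rh 0; rh 1;
  sg 1; rh 1; sg 1; rh 0; rh 0; sg 0; rh 0; sg 0; sg 0; rh 0; sg 1; sg 0; rh 0;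
  sg 1; rh 0; sg 0; rh 0; sg 0; sg 1; rh 0; sg 0; sg 1; rh 0; sg 0; sg 0; rh 0;
  sg 0; rh 0].

Definition kernel_v : seq ((bool * nat) * bool) := [::
  rh 0; sg 0; rh 0; sg 0; sg 0; sg 1; rh 1; sg 1; rh 1; sg 0; sg 0; rh 0; sg 0;
  rh 0; sg 0; rh 1; sg 1; rh 1; sg 1; sg 0; rh 0; sg 0; rh 0; sg 0; sg 0; rh 0;
  sg 1; rh 0; sg 0; sg 1; sg 0; rh 0; sg 0; rh 0; sg 1; sg 0; rh 0; sg 1; rh 0;
  sg 0; sg 0; sg 1; rh 1; sg 1; rh 1; sg 0; rh 0; sg 0; rh 0; sg 0; sg 0; rh 1;
  sg 1; rh 1; sg 1; sg 0; sg 0; rh 0; sg 0; rh 0; sg 0; rh 0; sg 1; rh 0; sg 0;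
  sg 1; rh 0; sg 0; rh 0; sg 0; sg 1; sg 0; rh 0; sg 1; rh 0; sg 0; sg 0; rh 0;
  sg 0; rh 0].

Definition image_u : seq (bool * bool) := [::
  (false, false); (false, false); (true, false); (true, false); (false, true);
  (false, true); (true, true); (false, false); (false, false); (true, true);
  (false, true); (false, true); (true, false); (true, false); (false, false);
  (false, false); (true, true); (false, true); (false, true); (true, true)].

Definition image_v : seq (bool * bool) := [::
  (false, true); (true, false); (true, false); (false, false); (false, false);
  (true, true); (true, true); (false, true); (true, true); (false, false);
  (false, false); (true, false); (false, true); (true, false); (true, false);
  (false, true); (false, true); (true, true); (true, true); (false, false);
  (false, false); (false, false); (true, true); (false, true); (false, true);
  (true, false)].

Definition witness (b : bool) : seq ((bool * nat) * bool) :=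
  if b then kernel_v else kernel_u.

Definition witness_letter (a : bool * bool) : seq ((bool * nat) * bool) :=
  if a.2 then winv (witness a.1) else witness a.1.

Definition image_letter (a : bool * bool) : seq (bool * bool) :=
  let g := if a.1 then image_v else image_u in if a.2 then winv g else g.

Lemma witness_three_strand b : three_strand (witness b).
Proof. by case: b; vm_compute. Qed.

Lemma witness_fixes_atoms b : fixes_test_atoms (witness b).
Proof. by case: b; vm_compute. Qed.

Lemma witness_letter_pure a p : colouring_after p (witness_letter a) =1 p.
Proof.
by apply: colouring_after_pure; case: a => -[] []; vm_compute.
Qed.

Lemma witness_letter_record a : reduce (crossing_word id (witness_letter a)) = image_letter a.
Proof. by apply/eqP; case: a => -[] []; vm_compute. Qed.

Lemma image_letter_nored a : nored (image_letter a) && (image_letter a != [::]).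
Proof. by case: a => -[] []; vm_compute. Qed.

Lemma image_letter_junction a b : b != flip a -> nored (image_letter a ++ image_letter b).
Proof. by case: a => -[] []; case: b => -[] []; vm_compute. Qed.

Lemma witness_record r :
  reduce (crossing_word id (wsubst witness r)) = reduce (flatten (map image_letter r)).
Proof.
rewrite wsubstE (proj1 (same_crossing_reduce _ _)).
suff Hpure p : p =1 id ->
    reduce (crossing_word p (img witness r)) = reduce (flatten (map image_letter r)).
  exact: Hpure.
elim: r p => [|a r IH] p Ep //.
rewrite img_cons -/(witness_letter a) crossing_word_cat -reduce_catl -reduce_catr IH; last first.
  by move=> k; rewrite witness_letter_pure Ep.
by rewrite reduce_catr (crossing_word_ext _ Ep) -reduce_catl witness_letter_record reduce_catl.
Qed.

Lemma image_nonempty r : reduced r -> r != [::] ->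
  reduce (flatten (map image_letter r)) != [::].
Proof.
case: r => [|a r] // /reduced_nored Hr _.
have /andP[_ Ha] := image_letter_nored a.
rewrite reduce_id; last exact: flatten_nored image_letter_nored image_letter_junction Hr.
by rewrite /=; case: (image_letter a) Ha.
Qed.

Theorem theorem3p2 (n : nat) (w : seq (bool * bool)) :
  3 <= n ->
  exists u v : seq ((bool * nat) * bool),
    [/\ fvb_word n u, fvb_word n v, in_ker n w u, in_ker n w v &
      forall r : seq (bool * bool), reduced r -> r != [::] ->
        ~ fvb_eq n (wsubst (fun b : bool => if b then v else u) r) [::]].
Proof.
move=> Hn; exists kernel_u, kernel_v; split.
- exact: (fvb_word_three_strand Hn (witness_three_strand false)).
- exact: (fvb_word_three_strand Hn (witness_three_strand true)).
- exact: in_ker_of_atoms (witness_three_strand false) (witness_fixes_atoms false).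
- exact: in_ker_of_atoms (witness_three_strand true) (witness_fixes_atoms true).
- move=> r Hr Hne /crossing_invariant /(_ id (@inj_id nat)) [Erecord _].
  by move: (image_nonempty Hr Hne); rewrite -witness_record Erecord.
Qed.
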